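(* Consider the three-gambler game $\Gamma_3(\mathbf{p},K)$ described in the context, and a stationary strategy profile $\mathbf{x}$ such that $\lim_{t\to\infty}\Pi^t(\mathbf{x})$ exists. Choose an arbitrary vector $\mathbf{U}_1^{(0)}\in\mathbb{R}^{N_K}$ and define $$\mathbf{U}_1^{(t+1)}=\widetilde{\Pi}_1(\mathbf{x})\mathbf{U}_1^{(t)}+\mathbf{b}_1,\qquad t=0,1,2,\dots$$ Then this iteration converges, and $\overline{\mathbf{U}}=\lim_{t\to\infty}\mathbf{U}_1^{(t)}$ is a solution of the payoff system $\mathbf{V}_1=\widetilde{\Pi}_1(\mathbf{x})\mathbf{V}_1+\mathbf{b}_1$.
   Context: The game $\Gamma_3(\mathbf{p},K)$ has three players $P_1,P_2,P_3$, parameters $\mathbf{p}=(p_1,p_2,p_3)\in(0,1)^3$ and an integer $K\ge3$. States. The state set is $S=\{(s_1,s_2,s_3)\in\mathbb{Z}_{\ge0}^3:s_1+s_2+s_3=K\}$, with $N_K=|S|=(K+1)(K+2)/2$. States are numbered so that the first three are $(K,0,0)$, $(0,K,0)$ and $(0,0,K)$; these terminal states are absorbing. Dynamics. In each round a player $P_n$ is selected equiprobably among those with positive capital. He selects another player $P_m$ with positive capital and wins one unit from $P_m$ with probability $p_{nm}$, otherwise pays one unit to $P_m$. Here $p_{12}=p_1$, $p_{21}=1-p_1$, $p_{23}=p_2$, $p_{32}=1-p_2$, $p_{31}=p_3$, $p_{13}=1-p_3$. Strategies. A stationary strategy profile $\mathbf{x}=(x_1(\mathbf{s}),x_2(\mathbf{s}),x_3(\mathbf{s}))_{\mathbf{s}\in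 S}$ gives, at each state: - the probability $x_1(\mathbf{s})$ that $P_1$ picks $P_2$ (else $P_3$); - the probability $x_2(\mathbf{s})$ that $P_2$ picks $P_3$ (else $P_1$); - the probability $x_3(\mathbf{s})$ that $P_3$ picks $P_1$ (else $P_2$). When two players remain, each picks the other. $\Pi(\mathbf{x})=(\pi_{i,j})$ is the transition matrix of the induced Markov chain on $S$. Matrices. $\widetilde{\Pi}_1(\mathbf{x})$ is the $N_K\times N_K$ matrix whose first three rows are zero and whose rows $4,\dots,N_K$ coincide with those of $\Pi(\mathbf{x})$. $\mathbf{b}_1=(1,0,0,\dots,0)^T\in\mathbb{R}^{N_K}$. *)

From HB Require Import structures.
From mathcomp Require Import all_boot all_order all_algebra.
From mathcomp Require Import all_classical all_reals all_analysis.
Set Implicit Arguments. Unset Strict Implicit. Unset Printing Implicit Defensive.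
Import Order.TTheory GRing.Theory Num.Theory.
Local Open Scope ring_scope.

(* Players P1,P2,P3 are the indices 0,1,2 : 'I_3. *)

(* States of Gamma_3(p,K): capitals (s_1,s_2,s_3) in N^3 with s_1+s_2+s_3 = K. *)
Definition state (K : nat) :=
  {s : {ffun 'I_3 -> 'I_K.+1} | (\sum_(i < 3) (s i : nat) == K)%N}.

Definition cap K (s : state K) (n : 'I_3) : nat := val s n.

Definition active K (s : state K) : {set 'I_3} := [set n | (0 < cap s n)%N].

Definition terminal K (s : state K) : bool := #|active s| == 1%N.

Definition nxt (n m : 'I_3) : bool := (m : nat) == (n.+1 %% 3)%N.

(* p_{nm}: p_{12}=p_1, p_{21}=1-p_1, p_{23}=p_2, p_{32}=1-p_2, p_{31}=p_3, p_{13}=1-p_3 *)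
Definition pw (R : nzRingType) (p : 'I_3 -> R) (n m : 'I_3) : R :=
  if nxt n m then p n else 1 - p m.

(* s' = s + e_n - e_m  (P_n wins one unit from P_m) *)
Definition move K (s : state K) (n m : 'I_3) (s' : state K) : bool :=
  [forall k, (cap s' k + (k == m) == cap s k + (k == n))%N].

(* probability that the selected player P_n picks P_m at state s.
   x n s is the probability that P_n picks his "next" player
   (x_1: P1 picks P2, x_2: P2 picks P3, x_3: P3 picks P1). With only two
   players left, each picks the other. *)
Definition pickp (R : nzRingType) K (x : 'I_3 -> state K -> R) (s : state K)
  (n m : 'I_3) : R :=
  if #|active s| == 2%N then 1 else if nxt n m then x n s else 1 - x n s.

Definition trans (R : fieldType) K (p : 'I_3 -> R) (x : 'I_3 -> state K -> R)
  (s s' : state K) : R :=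
  if (#|active s| <= 1)%N then (s == s')%:R else
  \sum_(n in active s) \sum_(m in active s | m != n)
     (#|active s|%:R)^-1 * pickp x s n m *
     (pw p n m * (move s n m s')%:R + (1 - pw p n m) * (move s m n s')%:R).

Definition NK K := #|{: state K}|.

Definition Pi (R : fieldType) K (p : 'I_3 -> R) (x : 'I_3 -> state K -> R)
  : 'M[R]_(NK K) :=
  \matrix_(i, j) trans p x (enum_val i) (enum_val j).

Definition Pit1 (R : fieldType) K (p : 'I_3 -> R) (x : 'I_3 -> state K -> R)
  : 'M[R]_(NK K) :=
  \matrix_(i, j) (if terminal (enum_val i) then 0 else Pi p x i j).

Definition b1 (R : nzRingType) K : 'cV[R]_(NK K) :=
  \col_i ((cap (enum_val i) ord0 == K)%:R).

Fixpoint iterU (R : nzRingType) N (A : 'M[R]_N) (b U0 : 'cV[R]_N) (t : nat)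
  : 'cV[R]_N :=
  match t with
  | 0 => U0
  | t'.+1 => A *m iterU A b U0 t' + b
  end.

(* The matrix Pit1 p x is substochastic, and the sum of squared capitals is a
   potential, bounded by 3 K^2, that every non-terminal row increases with
   positive probability: some active player picks an opponent with positive
   probability, and the richer of the two wins a unit with positive
   probability.  Hence from every state the chain killed at the terminal
   states dies within 3 K^2 + 1 steps with probability at least some a > 0,
   so (Pit1 p x)^t tends to 0 geometrically.  Consequently 1 - Pit1 p x is
   invertible, and U^(t) - Ubar = (Pit1 p x)^t (U^(0) - Ubar) tends to 0 for
   its fixed point Ubar. *)

From HB Require Import structures.
From mathcomp Require Import all_boot all_order all_algebra.
From mathcomp Require Import all_classical all_reals all_analysis.
From mathcomp Require Import lra zify.
Set Implicit Arguments. Unset Strict Implicit. Unset Printing Implicit Defensive.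
Import Order.TTheory GRing.Theory Num.Theory.
Import numFieldNormedType.Exports.
Local Open Scope classical_set_scope.
Local Open Scope ring_scope.

Lemma mxpowS (R : nzRingType) N (A : 'M[R]_N) t : A ^+ t.+1 = A *m A ^+ t.
Proof. exact: exprS. Qed.

Lemma iterU_fixpoint (R : nzRingType) N (A : 'M[R]_N) (b U0 Ubar : 'cV[R]_N) t :
  Ubar = A *m Ubar + b -> iterU A b U0 t = Ubar + A ^+ t *m (U0 - Ubar).
Proof.
move=> Ufix; elim: t => [|t IHt] /=; first by rewrite expr0 mul1mx addrC subrK.
by rewrite IHt mulmxDr mxpowS mulmxA addrAC -Ufix.
Qed.

Section Substochastic.
Variables (R : archiRealFieldType) (N : nat) (A : 'M[R]_N).
Hypothesis A_ge0 : forall i j, 0 <= A i j.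
Hypothesis A_rowsum_le1 : forall i, \sum_j A i j <= 1.

Definition survival t : 'cV[R]_N := A ^+ t *m const_mx 1.

Lemma mxpow_ge0 t i j : 0 <= (A ^+ t) i j.
Proof.
elim: t i j => [|t IHt] i j; first by rewrite expr0 mxE ler0n.
by rewrite mxpowS mxE; apply: sumr_ge0 => k _; apply: mulr_ge0.
Qed.

Lemma survivalE t i : survival t i 0 = \sum_j (A ^+ t) i j.
Proof. by rewrite mxE; apply: eq_bigr => j _; rewrite mxE mulr1. Qed.

Lemma survivalS t : survival t.+1 = A *m survival t.
Proof. by rewrite /survival mxpowS mulmxA. Qed.

Lemma survival_ge0 t i : 0 <= survival t i 0.
Proof. by rewrite survivalE; apply: sumr_ge0 => j _; apply: mxpow_ge0. Qed.

Lemma survival_le1 t i : survival t i 0 <= 1.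
Proof.
elim: t i => [|t IHt] i; first by rewrite /survival expr0 mul1mx mxE.
rewrite survivalS mxE; apply: le_trans (A_rowsum_le1 i).
by apply: ler_sum => j _; rewrite ler_piMr.
Qed.

Lemma mxpow_mulmx_norm_le (w : 'cV[R]_N) c t i :
  (forall j, `|w j 0| <= c) -> `|(A ^+ t *m w) i 0| <= c * survival t i 0.
Proof.
move=> w_le; rewrite survivalE mulr_sumr mxE.
apply: le_trans (ler_norm_sum _ _ _) _; apply: ler_sum => j _.
by rewrite normrM ger0_norm ?mxpow_ge0 // mulrC ler_wpM2r ?mxpow_ge0.
Qed.

Lemma survival_addn_le c t n i : (forall j, survival n j 0 <= c) ->
  survival (t + n) i 0 <= c * survival t i 0.
Proof.
move=> surv_le; rewrite /survival exprD -[_ * _]/(_ *m _) -mulmxA.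
apply: le_trans (ler_norm _) _; apply: mxpow_mulmx_norm_le => j.
by rewrite ger0_norm ?surv_le //; apply: survival_ge0.
Qed.

Variables (phi : 'I_N -> nat) (M : nat).
Hypothesis phi_le : forall i, (phi i <= M)%N.
Hypothesis A_escape :
  forall i, (forall j, A i j = 0) \/ exists2 j, (phi i < phi j)%N & 0 < A i j.

Definition up_mass i := \sum_(j | (phi i < phi j)%N) A i j.

Definition escape_rate := \prod_(i | 0 < up_mass i) up_mass i.

Lemma up_mass_le1 i : up_mass i <= 1.
Proof.
apply: le_trans (A_rowsum_le1 i).
by rewrite [leRHS](bigID (fun j => (phi i < phi j)%N)) lerDl sumr_ge0.
Qed.

Lemma escape_rate_gt0 : 0 < escape_rate.
Proof. exact: prodr_gt0. Qed.

Lemma escape_rate_le1 : escape_rate <= 1.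
Proof. by rewrite /escape_rate prodr_ile1 // => i /ltW ->; rewrite up_mass_le1. Qed.

Lemma escape_rate_le_up_mass i : 0 < up_mass i -> escape_rate <= up_mass i.
Proof.
move=> up_gt0; rewrite /escape_rate (bigD1 i) //=; apply: ler_piMr; first exact: ltW.
by apply: prodr_ile1 => j /andP[/ltW -> _]; rewrite up_mass_le1.
Qed.

Lemma survival_zero_row i t : (forall j, A i j = 0) -> survival t.+1 i 0 = 0.
Proof. by move=> Ai0; rewrite survivalS mxE big1 // => j _; rewrite Ai0 mul0r. Qed.

(* Each step climbs the potential [phi] with mass at least [escape_rate], and
   a row whose potential has reached [M] is zero. *)
Lemma survival_escape t i : (M <= phi i + t)%N ->
  survival t.+1 i 0 <= 1 - escape_rate ^+ t.
Proof.
have a_pow_ge0 k : 0 <= escape_rate ^+ k by rewrite exprn_ge0 ?ltW ?escape_rate_gt0.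
have a_pow_le1 k : escape_rate ^+ k <= 1.
  by rewrite exprn_ile1 ?escape_rate_le1 ?ltW ?escape_rate_gt0.
elim: t i => [|t IHt] i phi_ge.
  case: (A_escape i) => [Ai0|[j0 j0_up _]]; first by rewrite survival_zero_row ?subrr.
  by have := phi_le j0; lia.
case: (A_escape i) => [Ai0|[j0 j0_up Aij0_gt0]].
  by rewrite survival_zero_row // subr_ge0.
have up_gt0 : 0 < up_mass i.
  by rewrite /up_mass (bigD1 j0) //= ltr_pwDl // sumr_ge0.
have up_le : \sum_(j | (phi i < phi j)%N) A i j * survival t.+1 j 0
           <= up_mass i * (1 - escape_rate ^+ t).
  rewrite /up_mass mulr_suml; apply: ler_sum => j j_up.
  by rewrite ler_wpM2l // IHt //; have := phi_le j0; lia.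
have rest_le : \sum_(j | ~~ (phi i < phi j)%N) A i j * survival t.+1 j 0
             <= \sum_(j | ~~ (phi i < phi j)%N) A i j.
  by apply: ler_sum => j _; rewrite ler_piMr ?survival_le1.
rewrite survivalS mxE (bigID (fun j => (phi i < phi j)%N)) /= exprS.
have := A_rowsum_le1 i; rewrite (bigID (fun j => (phi i < phi j)%N)) /= -/(up_mass i).
have := escape_rate_le_up_mass up_gt0; have := escape_rate_gt0.
have := a_pow_le1 t; have := a_pow_ge0 t; nra.
Qed.

Definition decay := 1 - escape_rate ^+ M.

Lemma decay_ge0 : 0 <= decay.
Proof. by rewrite subr_ge0 exprn_ile1 ?escape_rate_le1 ?ltW ?escape_rate_gt0. Qed.

Lemma decay_lt1 : decay < 1.
Proof. by rewrite ltrBlDr ltrDl exprn_gt0 ?escape_rate_gt0. Qed.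

Lemma survival_decay k i : survival (k * M.+1) i 0 <= decay ^+ k.
Proof.
elim: k i => [|k IHk] i; first by rewrite mul0n expr0 survival_le1.
rewrite mulSn addnC exprS; apply: le_trans (survival_addn_le _ _ _) _.
  by move=> j; apply: survival_escape; rewrite leq_addl.
by rewrite ler_wpM2l ?decay_ge0.
Qed.

Lemma survival_cvg0 i : (fun t => survival t i 0) @ \oo --> 0.
Proof.
have decay_norm_lt1 : `|decay| < 1 by rewrite ger0_norm ?decay_lt1 ?decay_ge0.
apply/cvgrPdist_lt => e e_gt0.
have /cvgrPdist_lt/(_ e e_gt0) [k _ decay_small] := cvg_expr decay_norm_lt1.
exists (k * M.+1)%N => // t /= kt; rewrite sub0r normrN ger0_norm ?survival_ge0 //.
have := decay_small k (leqnn k); rewrite /= sub0r normrN ger0_norm ?exprn_ge0 ?decay_ge0 //.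
apply: le_lt_trans; rewrite -(subnKC kt); apply: le_trans (survival_addn_le _ _ _) _.
  by move=> j; apply: survival_le1.
by rewrite mul1r survival_decay.
Qed.

Lemma mxpow_mulmx_cvg0 (w : 'cV[R]_N) i : (fun t => (A ^+ t *m w) i 0) @ \oo --> 0.
Proof.
pose c := \sum_j `|w j 0|.
have w_le j : `|w j 0| <= c by rewrite /c (bigD1 j) //= lerDl sumr_ge0.
apply: norm_cvg0; apply: (@squeeze_cvgr _ _ _ _ (cst 0) (fun t => c * survival t i 0)).
- by near=> t; rewrite normr_ge0 mxpow_mulmx_norm_le.
- exact: cvg_cst.
- by rewrite -(mulr0 c); apply: cvgM; [exact: cvg_cst | exact: survival_cvg0].
Unshelve. all: by end_near.
Qed.

Lemma unitmx_1_sub : (1%:M - A) \in unitmx.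
Proof.
rewrite unitmxE unitfE -det_tr; apply/negP => /det0P[v /eqP v_neq0 v_ker].
have A_fix : A *m v^T = v^T.
  have : (1%:M - A) *m v^T = 0 by rewrite -[LHS]trmxK trmx_mul trmxK v_ker trmx0.
  by rewrite mulmxBl mul1mx => /eqP; rewrite subr_eq0 => /eqP.
have mxpow_fix t : A ^+ t *m v^T = v^T.
  by elim: t => [|t IHt]; rewrite ?expr0 ?mul1mx // mxpowS -mulmxA IHt.
apply: v_neq0; apply/matrixP => z j; rewrite ord1 mxE.
have := mxpow_mulmx_cvg0 v^T j; under eq_fun do rewrite mxpow_fix mxE.
exact: (cvg_unique _ (cvg_cst _)).
Qed.

Theorem iterU_cvg_fixpoint (b U0 : 'cV[R]_N) : exists Ubar : 'cV[R]_N,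
  (forall i, (fun t => iterU A b U0 t i 0) @ \oo --> Ubar i 0) /\
  Ubar = A *m Ubar + b.
Proof.
pose Ubar := invmx (1%:M - A) *m b.
have Ufix : Ubar = A *m Ubar + b.
  have : (1%:M - A) *m Ubar = b by rewrite mulmxA mulmxV ?mul1mx ?unitmx_1_sub.
  by rewrite mulmxBl mul1mx => /eqP; rewrite subr_eq addrC => /eqP.
exists Ubar; split=> // i.
have -> : (fun t => iterU A b U0 t i 0) = (fun t => Ubar i 0 + (A ^+ t *m (U0 - Ubar)) i 0).
  by apply: funext => t; rewrite (iterU_fixpoint U0 t Ufix) mxE.
rewrite -[X in _ --> X]addr0; apply: cvgD; [exact: cvg_cst | exact: mxpow_mulmx_cvg0].
Qed.
End Substochastic.

Lemma sumn_bigD2 (I : finType) (g : I -> nat) w l : w != l ->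
  (\sum_k g k = g w + g l + \sum_(k | (k != w) && (k != l)) g k)%N.
Proof.
move=> wl; rewrite (bigD1 w) //= (bigD1 l) /=; last by rewrite eq_sym wl.
by rewrite addnA.
Qed.

Section Gambling.
Variables (R : realFieldType) (K : nat) (p : 'I_3 -> R) (x : 'I_3 -> state K -> R).
Hypothesis p_in01 : forall n, 0 < p n < 1.
Hypothesis x_in01 : forall n s, 0 <= x n s <= 1.

Lemma pw_gt0 n m : 0 < pw p n m.
Proof. by rewrite /pw; case: ifP => _; have := p_in01 n; have := p_in01 m; lra. Qed.

Lemma pw_lt1 n m : pw p n m < 1.
Proof. by rewrite /pw; case: ifP => _; have := p_in01 n; have := p_in01 m; lra. Qed.

Lemma pickp_ge0 s n m : 0 <= pickp x s n m.
Proof. by rewrite /pickp; case: ifP => _ //; case: ifP => _; have := x_in01 n s; lra. Qed.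

Definition duel_prob (s s' : state K) (n m : 'I_3) : R :=
  (#|active s|%:R)^-1 * pickp x s n m *
    (pw p n m * (move s n m s')%:R + (1 - pw p n m) * (move s m n s')%:R).

Lemma transE s s' : (1 < #|active s|)%N ->
  trans p x s s' = \sum_(n in active s) \sum_(m in active s | m != n) duel_prob s s' n m.
Proof. by move=> gt1; rewrite /trans leqNgt gt1. Qed.

Lemma duel_prob_ge0 s s' n m : 0 <= duel_prob s s' n m.
Proof.
rewrite /duel_prob !mulr_ge0 ?invr_ge0 ?ler0n ?pickp_ge0 //.
by rewrite addr_ge0 // mulr_ge0 ?ler0n // ?subr_ge0 ltW // ?pw_gt0 ?pw_lt1.
Qed.

Lemma trans_ge0 s s' : 0 <= trans p x s s'.
Proof.
have [le1|gt1] := leqP #|active s| 1; first by rewrite /trans le1 ler0n.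
by rewrite transE // !sumr_ge0 // => n _; rewrite sumr_ge0 // => m _; apply: duel_prob_ge0.
Qed.

Lemma move_inj (s s1 s2 : state K) n m : move s n m s1 -> move s n m s2 -> s1 = s2.
Proof.
move=> /forallP mv1 /forallP mv2; apply: val_inj; apply/ffunP => k; apply: ord_inj.
move: (mv1 k) (mv2 k); rewrite /cap => /eqP + /eqP.
by case: (k == m); case: (k == n) => /=; lia.
Qed.

Lemma sum_move_le1 (s : state K) n m : \sum_(s' : state K) ((move s n m s')%:R : R) <= 1.
Proof.
have [s1 mv1|no_move] := pickP (move s n m); last first.
  by rewrite big1 ?ler01 // => s' _; rewrite no_move.
rewrite (bigD1 s1) //= mv1 big1 ?addr0 // => s' s'_neq.
by case mv: (move s n m s') => //; rewrite (move_inj mv1 mv) eqxx in s'_neq.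
Qed.

Lemma sum_duel_prob_le s n m :
  \sum_(s' : state K) duel_prob s s' n m <= (#|active s|%:R)^-1 * pickp x s n m.
Proof.
rewrite -mulr_sumr ler_piMr ?mulr_ge0 ?invr_ge0 ?ler0n ?pickp_ge0 //.
rewrite big_split -!mulr_sumr /=.
have := sum_move_le1 s n m; have := sum_move_le1 s m n.
have := pw_gt0 n m; have := pw_lt1 n m.
have : 0 <= \sum_(s' : state K) ((move s n m s')%:R : R) by rewrite sumr_ge0.
have : 0 <= \sum_(s' : state K) ((move s m n s')%:R : R) by rewrite sumr_ge0.
nra.
Qed.

Lemma sum_pickp s n : n \in active s -> (1 < #|active s|)%N ->
  \sum_(m in active s | m != n) pickp x s n m = 1.
Proof.
move=> n_act gt1; have := max_card (mem (active s)); rewrite card_ord.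
case E: #|active s| gt1 => [|[|[|[|//]]]] // _ _.
- rewrite (eq_bigl (fun m => m \in active s :\ n)) => [|m]; last by rewrite in_setD1 andbC.
  rewrite (eq_bigr (fun=> 1)) => [|m _]; last by rewrite /pickp E.
  have := cardsD1 n (active s); rewrite n_act E => card_rest.
  by rewrite sumr_const (_ : #|active s :\ n| = 1%N) //; lia.
- have act_full : active s = [set: 'I_3]%SET.
    by apply/eqP; rewrite eqEcard finset.subsetT cardsT card_ord E.
  rewrite (eq_bigl (fun m => m != n)) => [|m]; last by rewrite act_full finset.in_setT.
  rewrite (eq_bigr (fun m => if nxt n m then x n s else 1 - x n s)) => [|m _];
    last by rewrite /pickp E.
  rewrite /nxt; case: n {n_act} => -[|[|[|//]]] n_lt3;
    rewrite big_mkcond !big_ord_recl big_ord0 /=; lra.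
Qed.

Lemma trans_rowsum_le1 s : \sum_(s' : state K) trans p x s s' <= 1.
Proof.
have [le1|gt1] := leqP #|active s| 1.
  rewrite /trans le1 (bigD1 s) //= eqxx big1 ?addr0 // => s' /negbTE.
  by rewrite eq_sym => ->.
have card_neq0 : #|active s|%:R != 0 :> R by rewrite pnatr_eq0 -lt0n ltnW.
under eq_bigr do rewrite transE //.
rewrite exchange_big /=; under eq_bigr do rewrite exchange_big /=.
apply: le_trans (_ : _ <= \sum_(n in active s) (#|active s|%:R)^-1) _.
  apply: ler_sum => n n_act.
  rewrite -[leRHS]mulr1 -[X in _ * X](sum_pickp n_act gt1) mulr_sumr.
  by apply: ler_sum => m _; apply: sum_duel_prob_le.
by rewrite sumr_const -[leRHS](mulVf card_neq0) mulr_natr.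
Qed.

Lemma cap_sum (s : state K) : (\sum_k cap s k)%N = K.
Proof. exact: eqP (valP s). Qed.

Lemma cap_le (s : state K) k : (cap s k <= K)%N.
Proof. by rewrite -ltnS ltn_ord. Qed.

Lemma card_active_gt0 (s : state K) : (0 < K)%N -> (0 < #|active s|)%N.
Proof.
move=> K_gt0; have [k k_pos] : exists k, (0 < cap s k)%N.
  apply/existsP; apply: contraLR K_gt0 => /existsPn no_pos.
  by rewrite -(cap_sum s) big1 // => k _; move: (no_pos k); rewrite lt0n negbK => /eqP.
by apply/card_gt0P; exists k; rewrite inE.
Qed.

Definition cap_sqsum (s : state K) : nat := \sum_k cap s k ^ 2.

Lemma cap_sqsum_le (s : state K) : (cap_sqsum s <= 3 * K ^ 2)%N.
Proof.
rewrite -[3%N]card_ord -sum_nat_const; apply: leq_sum => k _.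
by rewrite leq_exp2r ?cap_le.
Qed.

Lemma move_exists (s : state K) w l : w != l -> (0 < cap s l)%N ->
  exists s', move s w l s'.
Proof.
move=> wl l_pos; have lw : (l == w) = false by rewrite eq_sym (negbTE wl).
have wl_le : (cap s w + cap s l <= K)%N.
  by have := cap_sum s; rewrite (sumn_bigD2 _ wl); lia.
pose c k := (cap s k + (k == w) - (k == l))%N.
have c_move k : (c k + (k == l) = cap s k + (k == w))%N.
  rewrite /c; case: (eqVneq k w) => [->|_]; first by rewrite (negbTE wl) /=; lia.
  by case: (eqVneq k l) => [->|_] /=; lia.
have c_lt k : (c k < K.+1)%N.
  have := cap_le s k; have := c_move k.
  by case: (eqVneq k w) => [->|_]; rewrite ?(negbTE wl) /=; lia.
have sum_indicator v : (\sum_(k < 3) (k == v) = 1)%N.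
  by rewrite (bigD1 v) //= eqxx big1 // => k /negbTE ->.
have c_sum : (\sum_(k < 3) ([ffun k => Ordinal (c_lt k)] k : nat) == K)%N.
  under eq_bigr do rewrite ffunE /=.
  have : (\sum_k (c k + (k == l)) = \sum_k (cap s k + (k == w)))%N.
    by apply: eq_bigr => k _; apply: c_move.
  by rewrite !big_split /= !sum_indicator cap_sum !addn1 => -[->].
exists (exist _ [ffun k => Ordinal (c_lt k)] c_sum).
by apply/forallP => k; rewrite /cap /= ffunE c_move.
Qed.

Lemma move_cap_sqsum_lt (s s' : state K) w l : w != l -> (cap s l <= cap s w)%N ->
  move s w l s' -> (cap_sqsum s < cap_sqsum s')%N.
Proof.
move=> wl l_le_w /forallP mv; have lw : (l == w) = false by rewrite eq_sym (negbTE wl).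
have cap' k : (cap s' k + (k == l) = cap s k + (k == w))%N by apply/eqP/mv.
rewrite /cap_sqsum !(sumn_bigD2 _ wl).
set S := (\sum_(k | (k != w) && (k != l)) cap s k ^ 2)%N.
have -> : (\sum_(k | (k != w) && (k != l)) cap s' k ^ 2 = S)%N.
  apply: eq_bigr => k /andP[/negbTE kw /negbTE kl].
  by have := cap' k; rewrite kw kl !addn0 => ->.
by have := cap' w; have := cap' l; rewrite !eqxx (negbTE wl) lw /=; nia.
Qed.

Lemma duel_prob_gt0 s s' n m : n \in active s -> 0 < pickp x s n m ->
  move s n m s' || move s m n s' -> 0 < duel_prob s s' n m.
Proof.
move=> n_act pick_gt0 mv; rewrite /duel_prob !mulr_gt0 //.
  by rewrite invr_gt0 ltr0n card_gt0; apply/set0Pn; exists n.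
have := ler0n R (move s n m s'); have := ler0n R (move s m n s').
have := pw_gt0 n m; have := pw_lt1 n m.
by case/orP: mv => -> /=; nra.
Qed.

Lemma duel_prob_le_trans s s' n m : (1 < #|active s|)%N ->
  n \in active s -> m \in active s -> m != n -> duel_prob s s' n m <= trans p x s s'.
Proof.
move=> gt1 n_act m_act mn; rewrite transE // (bigD1 n) //= (bigD1 m) /=; last first.
  by rewrite m_act mn.
rewrite -addrA lerDl addr_ge0 ?sumr_ge0 // => [k _|k _]; first exact: duel_prob_ge0.
by rewrite sumr_ge0 // => k' _; apply: duel_prob_ge0.
Qed.

Lemma exists_pickp_gt0 s n : n \in active s -> (1 < #|active s|)%N ->
  exists2 m, (m \in active s) && (m != n) & 0 < pickp x s n m.
Proof.
move=> n_act gt1; apply/exists_inP; apply: contraT => /exists_inPn pick_le0.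
have := sum_pickp n_act gt1; rewrite big1 => [/eqP|m m_dom].
  by rewrite eq_sym oner_eq0.
by apply/eqP; rewrite eq_le pickp_ge0 andbT leNgt pick_le0.
Qed.

Lemma trans_escape s : (1 < #|active s|)%N ->
  exists2 s', (cap_sqsum s < cap_sqsum s')%N & 0 < trans p x s s'.
Proof.
move=> gt1; have [n n_act] : exists n, n \in active s.
  by apply/set0Pn; rewrite -card_gt0 ltnW.
have [m /andP[m_act mn] pick_gt0] := exists_pickp_gt0 n_act gt1.
have cap_gt0 k : k \in active s -> (0 < cap s k)%N by rewrite inE.
have [s' mv sqsum_lt] :
    exists2 s', move s n m s' || move s m n s' & (cap_sqsum s < cap_sqsum s')%N.
  have nm : n != m by rewrite eq_sym.
  have [m_le_n | n_lt_m] := leqP (cap s m) (cap s n).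
    have [s' mv] := move_exists nm (cap_gt0 m m_act).
    by exists s'; rewrite ?mv // (move_cap_sqsum_lt nm m_le_n mv).
  have [s' mv] := move_exists mn (cap_gt0 n n_act).
  by exists s'; rewrite ?mv ?orbT // (move_cap_sqsum_lt mn (ltnW n_lt_m) mv).
exists s' => //; apply: lt_le_trans (duel_prob_le_trans s' gt1 n_act m_act mn).
exact: duel_prob_gt0.
Qed.

Lemma Pit1_ge0 i j : 0 <= Pit1 p x i j.
Proof. by rewrite !mxE; case: ifP => // _; apply: trans_ge0. Qed.

Lemma Pit1_rowsum_le1 i : \sum_j Pit1 p x i j <= 1.
Proof.
case term_i: (terminal (enum_val i)).
  by rewrite big1 ?ler01 // => j _; rewrite mxE term_i.
under eq_bigr do rewrite !mxE term_i.
by have := trans_rowsum_le1 (enum_val i); rewrite big_enum_val.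
Qed.

Lemma Pit1_escape (K_gt0 : (0 < K)%N) i : (forall j, Pit1 p x i j = 0) \/
  exists2 j, (cap_sqsum (enum_val i) < cap_sqsum (enum_val j))%N & 0 < Pit1 p x i j.
Proof.
case term_i: (terminal (enum_val i)); [by left=> j; rewrite mxE term_i | right].
have gt1 : (1 < #|active (enum_val i)|)%N.
  move: term_i (card_active_gt0 (enum_val i) K_gt0); rewrite /terminal.
  by case: #|_| => [|[|]].
have [s' sqsum_lt trans_gt0] := trans_escape gt1.
by exists (enum_rank s'); rewrite ?mxE ?term_i enum_rankK.
Qed.

End Gambling.

Theorem proposition4 (R : realType) (K : nat) (p : 'I_3 -> R)
  (x : 'I_3 -> state K -> R) (U0 : 'cV[R]_(NK K)) :
  (3 <= K)%N ->
  (forall n, 0 < p n < 1) ->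
  (forall n s, 0 <= x n s <= 1) ->
  (exists L : 'M[R]_(NK K),
      forall i j, (fun t : nat => (Pi p x ^+ t) i j) @ \oo --> L i j) ->
  exists Ubar : 'cV[R]_(NK K),
    (forall i, (fun t : nat => iterU (Pit1 p x) (b1 R K) U0 t i 0) @ \oo
                 --> Ubar i 0) /\
    Ubar = Pit1 p x *m Ubar + b1 R K.
Proof.
move=> K_ge3 p_in01 x_in01 _.
have K_gt0 : (0 < K)%N by apply: leq_trans K_ge3.
exact: (iterU_cvg_fixpoint (Pit1_ge0 p_in01 x_in01) (Pit1_rowsum_le1 p_in01 x_in01)
  (fun i => cap_sqsum_le (enum_val i)) (Pit1_escape p_in01 x_in01 K_gt0)).
Qed.
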